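(* Let $\mathcal{K}$ be a tame knot class in $\mathbb{R}^3$, $\gamma\in\mathcal{C}(\mathcal{K})\cap C^{1,1}(\mathbb{S}_1,\mathbb{R}^3)$, and $p_n\in\mathcal{P}_n$ with $p_n\to\gamma$ in $W^{1,\infty}(\mathbb{S}_1,\mathbb{R}^3)$. Let $s_n\ne t_n$ be parameters with $s_n\to s$, $t_n\to t$, $s\ne t$, such that $(p_n(s_n),p_n(t_n))\in\mathrm{dcrit}(p_n)$ for all $n$. Then $(\gamma(s),\gamma(t))\in\mathrm{dcrit}(\gamma)$.
   Context: $\mathbb{S}_1=\mathbb{R}/\mathbb{Z}$. $\mathcal{C}$ is the set of $\gamma\in W^{1,\infty}(\mathbb{S}_1,\mathbb{R}^3)$ with $|\gamma'|=1$ a.e.; $C^{1,1}$ means $\gamma'$ Lipschitz. $\mathcal{P}_n\subset\mathcal{C}$ is the set of arc length parametrisations of closed equilateral polygons with $n$ edges. For $p\in\mathcal{P}_n$, $\mathrm{dcrit}(p)$ is the set of pairs of distinct points $x=p(t)$, $y=p(s)$ with $s$ a local extremum of $u\mapsto|p(t)-p(u)|^2$ and $t$ a local extremum of $v\mapsto|p(v)-p(s)|^2$. For $\gamma\in\mathcal{C}\cap C^{1}$, $\mathrm{dcrit}(\gamma)$ is the set of pairs $(\gamma(t),\gamma(s))$ of distinct points with $\langle\gamma'(t),\gamma(t)-\gamma(s)\rangle=\langle\gamma'(s),\gamma(t)-\gamma(s)\rangle=0$. A tame knot class $\mathcal{K}$ is an ambient isotopy class of tame knots in $\mathbb{R}^3$;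 $\mathcal{C}(\mathcal{K})$ is the set of injective $\gamma\in\mathcal{C}$ whose image is a knot in $\mathcal{K}$. *)

From Stdlib Require Import Reals.
Open Scope R_scope.

Definition R3 : Type := (R * R * R)%type.
Definition c1 (v : R3) : R := fst (fst v).
Definition c2 (v : R3) : R := snd (fst v).
Definition c3 (v : R3) : R := snd v.
Definition vadd (u v : R3) : R3 := (c1 u + c1 v, c2 u + c2 v, c3 u + c3 v).
Definition vsub (u v : R3) : R3 := (c1 u - c1 v, c2 u - c2 v, c3 u - c3 v).
Definition vscale (a : R) (v : R3) : R3 := (a * c1 v, a * c2 v, a * c3 v).
Definition dot (u v : R3) : R := c1 u * c1 v + c2 u * c2 v + c3 u * c3 v.
Definition sqnorm (v : R3) : R := dot v v.
Definition norm (v : R3) : R := sqrt (sqnorm v).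

(** Curves [S_1 -> R^3] are represented as 1-periodic maps [R -> R^3]. *)
Definition periodic1 (g : R -> R3) : Prop := forall t, g (t + 1) = g t.

(** equality / convergence in S_1 = R/Z *)
Definition eqS1 (a b : R) : Prop := exists k : Z, a - b = IZR k.
Definition convS1 (u : nat -> R) (l : R) : Prop :=
  forall eps, eps > 0 -> exists N : nat, forall n, (N <= n)%nat ->
    exists k : Z, Rabs (u n - l - IZR k) < eps.

Definition vderiv (g : R -> R3) (t : R) (a : R3) : Prop :=
  derivable_pt_lim (fun u => c1 (g u)) t (c1 a) /\
  derivable_pt_lim (fun u => c2 (g u)) t (c2 a) /\
  derivable_pt_lim (fun u => c3 (g u)) t (c3 a).

Definition null_set (Z : R -> Prop) : Prop :=
  forall eps, eps > 0 -> exists l r : nat -> R,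
    (forall i, l i <= r i) /\
    (forall x, Z x -> exists i, l i < x < r i) /\
    (forall N, sum_f_R0 (fun i => r i - l i) N < eps).

Definition lipschitz (g : R -> R3) : Prop :=
  exists L, forall a b, norm (vsub (g a) (g b)) <= L * Rabs (a - b).

(** The class C: W^{1,infty}(S_1,R^3) (= Lipschitz, 1-periodic) with |g'| = 1 a.e. *)
Definition in_C (g : R -> R3) : Prop :=
  periodic1 g /\ lipschitz g /\
  exists Z, null_set Z /\
    forall t, ~ Z t -> exists a, vderiv g t a /\ norm a = 1.

Definition C11 (g : R -> R3) : Prop :=
  exists g' : R -> R3, (forall t, vderiv g t (g' t)) /\
    exists L, forall a b, norm (vsub (g' a) (g' b)) <= L * Rabs (a - b).

(** P_n: arc-length parametrisations of closed equilateral polygons with n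
    edges: affine (with speed 1) on each interval [a + k/n, a + (k+1)/n]. *)
Definition in_P (n : nat) (p : R -> R3) : Prop :=
  in_C p /\ (0 < n)%nat /\
  exists a : R, forall k : Z,
    let t0 := a + IZR k / INR n in
    let t1 := a + (IZR k + 1) / INR n in
    norm (vsub (p t1) (p t0)) = / INR n /\
    forall tau, 0 <= tau <= / INR n ->
      p (t0 + tau) = vadd (p t0) (vscale (INR n * tau) (vsub (p t1) (p t0))).

Definition loc_extremum (f : R -> R) (s : R) : Prop :=
  exists del, del > 0 /\
    ((forall u, Rabs (u - s) < del -> f u <= f s) \/
     (forall u, Rabs (u - s) < del -> f s <= f u)).

Definition dcrit_P (p : R -> R3) (x y : R3) : Prop :=
  x <> y /\ exists t s, x = p t /\ y = p s /\
    loc_extremum (fun u => sqnorm (vsub (p t) (p u))) s /\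
    loc_extremum (fun v => sqnorm (vsub (p v) (p s))) t.

Definition dcrit_C1 (g : R -> R3) (x y : R3) : Prop :=
  exists t s a b, x = g t /\ y = g s /\ x <> y /\
    vderiv g t a /\ vderiv g s b /\
    dot a (vsub x y) = 0 /\ dot b (vsub x y) = 0.

Definition W1inf_conv (p : nat -> R -> R3) (g : R -> R3) : Prop :=
  forall eps, eps > 0 -> exists N : nat, forall n, (N <= n)%nat ->
    (forall t, norm (vsub (p n t) (g t)) <= eps) /\
    exists Z, null_set Z /\ forall t, ~ Z t ->
      exists a b, vderiv (p n) t a /\ vderiv g t b /\ norm (vsub a b) <= eps.

Definition cont3 (f : R3 -> R3) (x : R3) : Prop :=
  forall eps, eps > 0 -> exists del, del > 0 /\
    forall y, norm (vsub y x) < del -> norm (vsub (f y) (f x)) < eps.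

Definition homeo (f : R3 -> R3) : Prop :=
  exists h : R3 -> R3, (forall x, h (f x) = x) /\ (forall y, f (h y) = y) /\
    (forall x, cont3 f x) /\ (forall y, cont3 h y).

Definition ambient_isotopy (H : R -> R3 -> R3) : Prop :=
  (forall x, H 0 x = x) /\
  (forall t, 0 <= t <= 1 -> homeo (H t)) /\
  (forall t x, 0 <= t <= 1 -> forall eps, eps > 0 -> exists del, del > 0 /\
     forall t' x', 0 <= t' <= 1 -> Rabs (t' - t) < del -> norm (vsub x' x) < del ->
       norm (vsub (H t' x') (H t x)) < eps).

Definition amb_isotopic (A B : R3 -> Prop) : Prop :=
  exists H, ambient_isotopy H /\ forall y, B y <-> exists x, A x /\ y = H 1 x.

Definition image (g : R -> R3) : R3 -> Prop := fun y => exists t, y = g t.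

Definition injS1 (g : R -> R3) : Prop := forall a b, g a = g b -> eqS1 a b.

Definition cont_curve (g : R -> R3) : Prop :=
  forall t eps, eps > 0 -> exists del, del > 0 /\
    forall u, Rabs (u - t) < del -> norm (vsub (g u) (g t)) < eps.

Definition knot (A : R3 -> Prop) : Prop :=
  exists g, cont_curve g /\ periodic1 g /\ injS1 g /\
    forall y, A y <-> image g y.

Definition polygonal_knot (A : R3 -> Prop) : Prop :=
  knot A /\ exists (m : nat) (v : nat -> R3), v m = v O /\
    forall y, A y <-> exists i, (i < m)%nat /\ exists tau, 0 <= tau <= 1 /\
      y = vadd (v i) (vscale tau (vsub (v (S i)) (v i))).

Definition tame_knot (A : R3 -> Prop) : Prop :=
  knot A /\ exists P, polygonal_knot P /\ amb_isotopic P A.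

Definition tame_knot_class (K : (R3 -> Prop) -> Prop) : Prop :=
  exists A0, tame_knot A0 /\ forall B, K B <-> (knot B /\ amb_isotopic A0 B).

Definition in_CK (K : (R3 -> Prop) -> Prop) (g : R -> R3) : Prop :=
  in_C g /\ injS1 g /\ K (image g).

(* By symmetry it suffices to show
   <g(s) - g(t), g'(t)> = 0.  Suppose not.  For large n the parameter b at which
   p_n(t_n) is a local extremum of the squared distance to p_n(s_n) lies, after an
   integer shift, close to t: this uses that the injective closed curve g has a
   continuous inverse, and that p_n is uniformly close to g.  Near b the polygon
   is affine on both sides, with velocities e+ and e-; extremality forces
   <p_n(s_n) - p_n(b), e+> and <p_n(s_n) - p_n(b), e-> to have opposite signs
   (or vanish).  But p_n(s_n) - p_n(b) approximates g(s) - g(t), and since the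
   velocities of p_n approximate g' off a null set and g' is Lipschitz, e+ and e-
   approximate g'(t); both products then approximate <g(s) - g(t), g'(t)> != 0. *)

From Pilot Require Import Defs.
From Stdlib Require Import Reals Lra Lia List ZArith.
Open Scope R_scope.
Import Pilot.Defs.

Lemma R3_eq (u v : R3) : c1 u = c1 v -> c2 u = c2 v -> c3 u = c3 v -> u = v.
Proof.
  destruct u as [[u1 u2] u3], v as [[v1 v2] v3]; unfold c1, c2, c3; simpl.
  intros -> -> ->; reflexivity.
Qed.

Lemma comp_le_norm (v : R3) :
  Rabs (c1 v) <= norm v /\ Rabs (c2 v) <= norm v /\ Rabs (c3 v) <= norm v.
Proof.
  unfold norm, sqnorm, dot; rewrite <- !sqrt_Rsqr_abs.
  repeat split; apply sqrt_le_1_alt; unfold Rsqr; nra.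
Qed.

Definition box_close (r : R) (u v : R3) : Prop :=
  Rabs (c1 u - c1 v) <= r /\ Rabs (c2 u - c2 v) <= r /\ Rabs (c3 u - c3 v) <= r.

Lemma norm_box_close (r : R) (u v : R3) : norm (vsub u v) <= r -> box_close r u v.
Proof.
  intro H; destruct (comp_le_norm (vsub u v)) as [H1 [H2 H3]].
  unfold box_close, vsub, c1, c2, c3 in *; simpl in *; repeat split; lra.
Qed.

Lemma Rabs_sub_triang (a b c : R) : Rabs (a - c) <= Rabs (a - b) + Rabs (b - c).
Proof. replace (a - c) with ((a - b) + (b - c)) by ring; apply Rabs_triang. Qed.

Lemma box_close_trans (r r' : R) (u v w : R3) :
  box_close r u v -> box_close r' v w -> box_close (r + r') u w.
Proof.
  intros [A1 [A2 A3]] [B1 [B2 B3]].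
  pose proof (Rabs_sub_triang (c1 u) (c1 v) (c1 w)).
  pose proof (Rabs_sub_triang (c2 u) (c2 v) (c2 w)).
  pose proof (Rabs_sub_triang (c3 u) (c3 v) (c3 w)).
  repeat split; lra.
Qed.

Lemma box_close_sym (r : R) (u v : R3) : box_close r u v -> box_close r v u.
Proof. intros [H1 [H2 H3]]; repeat split; rewrite Rabs_minus_sym; assumption. Qed.

Lemma box_close_le (r r' : R) (u v : R3) : r <= r' -> box_close r u v -> box_close r' u v.
Proof. intros Hr [H1 [H2 H3]]; repeat split; lra. Qed.

Lemma box_close_vsub (r r' : R) (a b c d : R3) :
  box_close r a b -> box_close r' c d -> box_close (r + r') (vsub a c) (vsub b d).
Proof.
  assert (Hsub : forall x y z w, Rabs (x - z - (y - w)) <= Rabs (x - y) + Rabs (z - w)).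
  { intros x y z w; replace (x - z - (y - w)) with ((x - y) + - (z - w)) by ring.
    rewrite <- (Rabs_Ropp (z - w)); apply Rabs_triang. }
  intros [A1 [A2 A3]] [B1 [B2 B3]]; unfold box_close, vsub, c1, c2, c3 in *; simpl in *.
  repeat split; (eapply Rle_trans; [apply Hsub|]); lra.
Qed.

Definition l1norm (v : R3) : R := Rabs (c1 v) + Rabs (c2 v) + Rabs (c3 v).

Lemma mul_close (x y x0 y0 r : R) : 0 <= r <= 1 ->
  Rabs (x - x0) <= r -> Rabs (y - y0) <= r ->
  Rabs (x * y - x0 * y0) <= r * (Rabs x0 + Rabs y0 + 1).
Proof.
  intros Hr Hx Hy.
  replace (x * y - x0 * y0) with (x0 * (y - y0) + (x - x0) * y0 + (x - x0) * (y - y0)) by ring.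
  eapply Rle_trans; [apply Rabs_triang|].
  eapply Rle_trans; [apply Rplus_le_compat_r, Rabs_triang|].
  rewrite !Rabs_mult.
  pose proof (Rabs_pos x0); pose proof (Rabs_pos y0).
  pose proof (Rabs_pos (x - x0)); pose proof (Rabs_pos (y - y0)); nra.
Qed.

Lemma dot_close (d e D G : R3) (r : R) : 0 <= r <= 1 ->
  box_close r d D -> box_close r e G ->
  Rabs (dot d e - dot D G) <= r * (l1norm D + l1norm G + 3).
Proof.
  intros Hr [H1 [H2 H3]] [H4 [H5 H6]]; unfold dot, l1norm.
  pose proof (mul_close _ _ _ _ _ Hr H1 H4); pose proof (mul_close _ _ _ _ _ Hr H2 H5).
  pose proof (mul_close _ _ _ _ _ Hr H3 H6).
  replace (c1 d * c1 e + c2 d * c2 e + c3 d * c3 e - (c1 D * c1 G + c2 D * c2 G + c3 D * c3 G))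
    with ((c1 d * c1 e - c1 D * c1 G) + (c2 d * c2 e - c2 D * c2 G)
          + (c3 d * c3 e - c3 D * c3 G)) by ring.
  eapply Rle_trans; [apply Rabs_triang|].
  eapply Rle_trans; [apply Rplus_le_compat_r, Rabs_triang|]; lra.
Qed.

Lemma Rabs_le_between (x a : R) : Rabs x <= a -> - a <= x <= a.
Proof. pose proof (Rle_abs x); pose proof (Rle_abs (- x)); rewrite Rabs_Ropp in *; lra. Qed.

Lemma sign_limit (c0 : R) :
  (forall r, 0 < r -> exists x y, Rabs (x - c0) <= r /\ Rabs (y - c0) <= r /\ x * y <= 0) ->
  c0 = 0.
Proof.
  intro H; destruct (Req_dec c0 0) as [|Hc0]; auto; exfalso.
  assert (Hpos : 0 < Rabs c0) by (apply Rabs_pos_lt; auto).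
  destruct (H (Rabs c0 / 2)) as [x [y [Hx [Hy Hxy]]]]; [lra|].
  apply Rabs_le_between in Hx; apply Rabs_le_between in Hy.
  destruct (Rlt_or_le 0 c0) as [Hc|Hc].
  - rewrite Rabs_pos_eq in * by lra; nra.
  - rewrite Rabs_left in * by lra; nra.
Qed.

Lemma orthogonal_of_approximations (D G : R3) :
  (forall r, 0 < r <= 1 -> exists d ep em,
     box_close r d D /\ box_close r ep G /\ box_close r em G /\ dot d ep * dot d em <= 0) ->
  dot D G = 0.
Proof.
  intro Happ; apply sign_limit; intros r' Hr'.
  set (M := l1norm D + l1norm G + 3).
  assert (HM : 3 <= M).
  { unfold M, l1norm; pose proof (Rabs_pos (c1 D)); pose proof (Rabs_pos (c2 D));
    pose proof (Rabs_pos (c3 D)); pose proof (Rabs_pos (c1 G)); pose proof (Rabs_pos (c2 G));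
    pose proof (Rabs_pos (c3 G)); lra. }
  set (r := Rmin 1 (r' / M)).
  assert (Hr : 0 < r <= 1) by (split; [apply Rmin_pos; [lra|apply Rdiv_lt_0_compat; lra]|apply Rmin_l]).
  assert (HrM : r * M <= r').
  { assert (r <= r' / M) by apply Rmin_r.
    apply Rle_trans with (r' / M * M); [apply Rmult_le_compat_r; lra|].
    right; field; lra. }
  destruct (Happ r Hr) as [d [ep [em [Hd [Hep [Hem Hsign]]]]]].
  exists (dot d ep), (dot d em); split; [|split; [|exact Hsign]];
    (eapply Rle_trans; [apply dot_close; eauto; lra|exact HrM]).
Qed.

Lemma periodic_shift {A : Type} (f : R -> A) :
  (forall u, f (u + 1) = f u) -> forall x k, f (x + IZR k) = f x.
Proof.
  intros Hf x k.
  assert (Hnat : forall y n, f (y + INR n) = f y).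
  { intros y n; induction n as [|n IH]; [simpl; rewrite Rplus_0_r; reflexivity|].
    rewrite S_INR, <- Rplus_assoc, Hf; exact IH. }
  destruct (Z_le_gt_dec 0 k) as [Hk|Hk].
  - replace k with (Z.of_nat (Z.to_nat k)) by lia; rewrite <- INR_IZR_INZ; apply Hnat.
  - replace k with (- Z.of_nat (Z.to_nat (- k)))%Z by lia.
    rewrite opp_IZR, <- INR_IZR_INZ, <- (Hnat (x + - INR (Z.to_nat (- k))) (Z.to_nat (- k))).
    f_equal; ring.
Qed.

Lemma loc_extremum_shift (f : R -> R) (b : R) (k : Z) :
  (forall u, f (u + 1) = f u) -> loc_extremum f b -> loc_extremum f (b + IZR k).
Proof.
  intros Hf [del [Hdel H]]; exists del; split; auto.
  assert (Hback : forall u, f u = f (u + IZR (- k))) by (intro u; rewrite periodic_shift; auto).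
  assert (Hnear : forall u, Rabs (u - (b + IZR k)) < del -> Rabs (u + IZR (- k) - b) < del).
  { intros u Hu; rewrite opp_IZR; replace (u + - IZR k - b) with (u - (b + IZR k)) by ring; auto. }
  rewrite (Hback (b + IZR k)), opp_IZR; replace (b + IZR k + - IZR k) with b by ring.
  destruct H as [H|H]; [left|right]; intros u Hu; rewrite (Hback u); apply H, Hnear; auto.
Qed.

Definition eventually (P : nat -> Prop) : Prop :=
  exists N : nat, forall n, (N <= n)%nat -> P n.

Lemma eventually_and (P Q : nat -> Prop) :
  eventually P -> eventually Q -> eventually (fun n => P n /\ Q n).
Proof.
  intros [N1 H1] [N2 H2]; exists (Nat.max N1 N2); intros n Hn; split; [apply H1|apply H2]; lia.
Qed.

Lemma eventually_exists (P : nat -> Prop) : eventually P -> exists n, P n.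
Proof. intros [N H]; exists N; apply H; lia. Qed.

Lemma eventually_ge (m : nat) : eventually (fun n => (m <= n)%nat).
Proof. exists m; auto. Qed.

Lemma eventually_inv_small (eps : R) : 0 < eps -> eventually (fun n => / INR n <= eps).
Proof.
  intro He; destruct (archimed_cor1 eps He) as [N [HN HN0]]; exists N; intros n Hn.
  apply Rle_trans with (/ INR N); [|lra].
  apply Rinv_le_contravar; [apply lt_0_INR; lia|apply le_INR; lia].
Qed.

(* A null set contains no interval: a countable cover of [a,b] by open intervals
   has a finite subcover (Heine-Borel), whose total length is at least b - a. *)
Section NullSets.
Variables l r : nat -> R.
Hypothesis Hlr : forall i, l i <= r i.

Fixpoint total_length (L : list nat) : R :=
  match L with nil => 0 | i :: L' => (r i - l i) + total_length L' end.

Lemma total_length_nonneg (L : list nat) : 0 <= total_length L.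
Proof. induction L as [|i L IH]; simpl; [lra|]; pose proof (Hlr i); lra. Qed.

Lemma total_length_app (L1 L2 : list nat) :
  total_length (L1 ++ L2) = total_length L1 + total_length L2.
Proof. induction L1 as [|i L1 IH]; simpl; [ring|]; rewrite IH; ring. Qed.

Lemma total_length_seq (N : nat) :
  total_length (seq 0 (S N)) = sum_f_R0 (fun i => r i - l i) N.
Proof.
  induction N as [|N IH]; [simpl; ring|].
  rewrite seq_S, total_length_app, IH; simpl; ring.
Qed.

(* Finitely many open intervals covering [a,b] have total length at least b - a;
   by induction on their number, removing the interval containing b. *)
Lemma finite_cover_length (n : nat) : forall (L : list nat) (a b : R), (length L <= n)%nat ->
  (forall x, a <= x <= b -> exists i, In i L /\ l i < x < r i) -> b - a <= total_length L.
Proof.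
  induction n as [|n IH]; intros L a b HL Hcov.
  - destruct L; [|simpl in HL; lia].
    destruct (Rle_dec a b) as [Hab|Hab]; [destruct (Hcov a) as [i [[] _]]; lra|simpl; lra].
  - destruct (Rle_dec a b) as [Hab|Hab]; [|pose proof (total_length_nonneg L); lra].
    destruct (Hcov b) as [j [Hj Hjb]]; [lra|].
    destruct (in_split _ _ Hj) as [L1 [L2 ->]].
    assert (Hsplit : total_length (L1 ++ j :: L2) = total_length (L1 ++ L2) + (r j - l j))
      by (rewrite !total_length_app; simpl; ring).
    rewrite Hsplit; pose proof (total_length_nonneg (L1 ++ L2)).
    destruct (Rlt_dec (l j) a) as [Hla|Hla]; [lra|].
    enough (l j - a <= total_length (L1 ++ L2)) by lra.
    apply IH; [rewrite length_app in *; simpl in HL; lia|].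
    intros x Hx; destruct (Hcov x) as [i [Hi Hix]]; [lra|]; exists i; split; [|exact Hix].
    apply in_app_or in Hi; apply in_or_app; destruct Hi as [Hi|[<-|Hi]]; auto; lra.
Qed.
End NullSets.

Lemma list_bounded (lst : list R) : exists N : nat, forall y, In y lst -> y <= INR N.
Proof.
  induction lst as [|y lst [N HN]]; [exists O; intros y []|].
  exists (Nat.max N (Z.to_nat (up y))); intros z [<-|Hz].
  - apply Rle_trans with (INR (Z.to_nat (up y))); [|apply le_INR; lia].
    destruct (archimed y) as [H1 _]; destruct (Z_le_gt_dec 0 (up y)) as [Hup|Hup].
    + rewrite INR_IZR_INZ, Z2Nat.id by lia; lra.
    + apply Z.gt_lt, IZR_lt in Hup; pose proof (pos_INR (Z.to_nat (up y))); lra.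
  - apply Rle_trans with (INR N); [auto|apply le_INR; lia].
Qed.

Lemma finite_subcover (l r : nat -> R) (a b : R) :
  (forall x, a <= x <= b -> exists i, l i < x < r i) ->
  exists N : nat, forall x, a <= x <= b -> exists i, (i <= N)%nat /\ l i < x < r i.
Proof.
  intro Hcov.
  set (fam := mkfamily (fun x => exists i : nat, x = INR i)
     (fun x y => exists i : nat, x = INR i /\ l i < y < r i)
     (fun x Hx => match Hx with ex_intro _ y (ex_intro _ i (conj E _)) => ex_intro _ i E end)).
  destruct (compact_P3 a b fam) as [D [HcovD Hfin]].
  - split.
    + intros x Hx; destruct (Hcov x Hx) as [i Hi]; exists (INR i); simpl; exists i; auto.
    + intros x y [i [E Hi]].
      assert (Hp : 0 < Rmin (y - l i) (r i - y)) by (apply Rmin_pos; lra).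
      exists (mkposreal _ Hp); intros z Hz; unfold disc in Hz; simpl in Hz.
      exists i; split; auto.
      pose proof (Rmin_l (y - l i) (r i - y)); pose proof (Rmin_r (y - l i) (r i - y)).
      apply Rabs_def2 in Hz; lra.
  - destruct Hfin as [lst Hlst]; destruct (list_bounded lst) as [N HN].
    exists N; intros x Hx; destruct (HcovD x Hx) as [y [[i [-> Hi]] Dy]].
    exists i; split; auto; apply INR_le, HN, Hlst; split; [exists i|]; auto.
Qed.

Lemma null_set_no_interval (Z : R -> Prop) (a b : R) :
  null_set Z -> a < b -> exists x, a < x < b /\ ~ Z x.
Proof.
  intros HZ Hab; apply Classical_Prop.NNPP; intro Hall.
  destruct (HZ ((b - a) / 2)) as [l [r [Hlr [Hcov Hsum]]]]; [lra|].
  set (a' := a + (b - a) / 4); set (b' := b - (b - a) / 4).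
  assert (Hcov' : forall x, a' <= x <= b' -> exists i, l i < x < r i).
  { intros x Hx; apply Hcov, Classical_Prop.NNPP; intro HnZ.
    apply Hall; exists x; unfold a', b' in Hx; split; [lra|auto]. }
  destruct (finite_subcover l r a' b' Hcov') as [N HN].
  assert (Hlen : b' - a' <= sum_f_R0 (fun i => r i - l i) N).
  { rewrite <- total_length_seq.
    apply (finite_cover_length l r Hlr (length (seq 0 (S N)))); auto.
    intros x Hx; destruct (HN x Hx) as [i [Hi Hix]]; exists i; split; auto; apply in_seq; lia. }
  specialize (Hsum N); unfold a', b' in Hlen; lra.
Qed.

Lemma vderiv_unique (g : R -> R3) (t : R) (a b : R3) : vderiv g t a -> vderiv g t b -> a = b.
Proof. intros [A1 [A2 A3]] [B1 [B2 B3]]; apply R3_eq; eapply uniqueness_limite; eauto. Qed.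

Lemma derivative_of_affine (f : R -> R) (x l A B lo hi : R) : lo < x < hi ->
  (forall y, lo < y < hi -> f y = A + y * B) -> derivable_pt_lim f x l -> l = B.
Proof.
  intros Hx Hf Hd; apply (uniqueness_limite f x); [exact Hd|].
  intros eps He.
  assert (Hdel : 0 < Rmin (x - lo) (hi - x)) by (apply Rmin_pos; lra).
  exists (mkposreal _ Hdel); intros h Hh0 Hh; simpl in Hh.
  pose proof (Rmin_l (x - lo) (hi - x)); pose proof (Rmin_r (x - lo) (hi - x)).
  apply Rabs_def2 in Hh.
  rewrite (Hf (x + h)), (Hf x) by lra.
  replace ((A + (x + h) * B - (A + x * B)) / h - B) with 0 by (field; exact Hh0).
  rewrite Rabs_R0; exact He.
Qed.

Lemma vderiv_affine (q : R -> R3) (tau lo hi s : R) (P e a : R3) : lo < tau < hi ->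
  (forall y, lo < y < hi -> q y = vadd P (vscale (y - s) e)) -> vderiv q tau a -> a = e.
Proof.
  intros Ht Hq [D1 [D2 D3]]; apply R3_eq.
  - apply (derivative_of_affine (fun u => c1 (q u)) tau _ (c1 P - s * c1 e) (c1 e) lo hi Ht); auto.
    intros y Hy; rewrite (Hq y Hy); unfold vadd, vscale, c1; simpl; ring.
  - apply (derivative_of_affine (fun u => c2 (q u)) tau _ (c2 P - s * c2 e) (c2 e) lo hi Ht); auto.
    intros y Hy; rewrite (Hq y Hy); unfold vadd, vscale, c2; simpl; ring.
  - apply (derivative_of_affine (fun u => c3 (q u)) tau _ (c3 P - s * c3 e) (c3 e) lo hi Ht); auto.
    intros y Hy; rewrite (Hq y Hy); unfold vadd, vscale, c3; simpl; ring.
Qed.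

Definition comp_continuous (g : R -> R3) : Prop :=
  forall t, continuity_pt (fun u => c1 (g u)) t /\ continuity_pt (fun u => c2 (g u)) t /\
            continuity_pt (fun u => c3 (g u)) t.

Lemma differentiable_comp_continuous (g g' : R -> R3) :
  (forall t, vderiv g t (g' t)) -> comp_continuous g.
Proof.
  intros Hd t; destruct (Hd t) as [D1 [D2 D3]].
  repeat split; eapply derivable_continuous_pt; eexists; eauto.
Qed.

Lemma continuity_eps (f : R -> R) (x eps : R) : continuity_pt f x -> eps > 0 ->
  exists del, del > 0 /\ forall u, Rabs (u - x) < del -> Rabs (f u - f x) < eps.
Proof.
  intros H He; destruct (H eps He) as [del [Hdel Hb]]; exists del; split; auto.
  intros u Hu; destruct (Req_dec x u) as [<-|Hne]; [rewrite Rminus_diag, Rabs_R0; lra|].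
  apply (Hb u); split; [split; [exact I|exact Hne]|exact Hu].
Qed.

Lemma continuous_box_close (g : R -> R3) (x r : R) : comp_continuous g -> 0 < r ->
  exists del, del > 0 /\ forall u, Rabs (u - x) < del -> box_close r (g u) (g x).
Proof.
  intros Hg Hr; destruct (Hg x) as [C1 [C2 C3]].
  destruct (continuity_eps _ _ r C1) as [d1 [P1 Q1]]; [lra|].
  destruct (continuity_eps _ _ r C2) as [d2 [P2 Q2]]; [lra|].
  destruct (continuity_eps _ _ r C3) as [d3 [P3 Q3]]; [lra|].
  exists (Rmin d1 (Rmin d2 d3)); split; [repeat apply Rmin_pos; lra|].
  intros u Hu; pose proof (Rmin_l d1 (Rmin d2 d3)); pose proof (Rmin_r d1 (Rmin d2 d3)).
  pose proof (Rmin_l d2 d3); pose proof (Rmin_r d2 d3).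
  repeat split; left; [apply Q1|apply Q2|apply Q3]; lra.
Qed.

Lemma convS1_image (g : R -> R3) (xn : nat -> R) (X r : R) :
  comp_continuous g -> periodic1 g -> convS1 xn X -> 0 < r ->
  eventually (fun n => box_close r (g (xn n)) (g X)).
Proof.
  intros Hg Hgp Hx Hr; destruct (continuous_box_close g X r Hg Hr) as [del [Hdel Hclose]].
  destruct (Hx del Hdel) as [N HN]; exists N; intros n Hn; destruct (HN n Hn) as [k Hk].
  rewrite <- (periodic_shift g Hgp (xn n) (- k)); apply Hclose.
  rewrite opp_IZR; replace (xn n + - IZR k - X) with (xn n - X - IZR k) by ring; exact Hk.
Qed.

Definition l1dist (u v : R3) : R := l1norm (vsub u v).

Lemma l1dist_eq0 (u v : R3) : l1dist u v = 0 -> u = v.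
Proof.
  unfold l1dist, l1norm; intro H.
  pose proof (Rabs_pos (c1 (vsub u v))); pose proof (Rabs_pos (c2 (vsub u v))).
  pose proof (Rabs_pos (c3 (vsub u v))).
  assert (Hzero : forall x, Rabs x <= 0 -> x = 0).
  { intros x Hx; destruct (Req_dec x 0) as [|Hx0]; auto; apply Rabs_pos_lt in Hx0; lra. }
  apply R3_eq; apply Rminus_diag_uniq, Hzero;
    [change (c1 u - c1 v) with (c1 (vsub u v)) | change (c2 u - c2 v) with (c2 (vsub u v))
    | change (c3 u - c3 v) with (c3 (vsub u v))]; lra.
Qed.

Lemma l1dist_nonneg (u v : R3) : 0 <= l1dist u v.
Proof.
  unfold l1dist, l1norm; pose proof (Rabs_pos (c1 (vsub u v)));
  pose proof (Rabs_pos (c2 (vsub u v))); pose proof (Rabs_pos (c3 (vsub u v))); lra.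
Qed.

Lemma l1dist_box_close (r : R) (u v : R3) : box_close r u v -> l1dist u v <= 3 * r.
Proof. intros [H1 [H2 H3]]; unfold l1dist, l1norm, vsub, c1, c2, c3 in *; simpl in *; lra. Qed.

Lemma continuity_pt_l1dist (g : R -> R3) (y : R3) (t : R) :
  comp_continuous g -> continuity_pt (fun u => l1dist (g u) y) t.
Proof.
  intro Hg; destruct (Hg t) as [C1 [C2 C3]].
  assert (Hdist : forall f a, continuity_pt f t -> continuity_pt (fun u => Rabs (f u - a)) t).
  { intros f a Hf; apply (continuity_pt_comp (fun u => f u - a) Rabs); [|apply Rcontinuity_abs].
    apply (continuity_pt_minus f (fct_cte a)); [exact Hf|].
    apply continuity_pt_const; intros ? ?; reflexivity. }
  unfold l1dist, l1norm; repeat apply (continuity_pt_plus (fun u => _) (fun u => _)); apply Hdist; auto.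
Qed.

(* Continuity of the inverse of an injective closed curve: if g(u) is close to
   g(Y), then u is close to Y modulo 1.  The l1 distance to g(Y) attains a
   positive minimum on the parameters at distance >= del from Y modulo 1. *)
Lemma injective_curve_inverse (g : R -> R3) (Y del : R) :
  comp_continuous g -> periodic1 g -> injS1 g -> 0 < del <= 1 / 2 ->
  exists m, m > 0 /\ forall u, box_close m (g u) (g Y) -> exists k : Z, Rabs (u + IZR k - Y) < del.
Proof.
  intros Hg Hgp Hinj Hdel.
  set (phi := fun u => l1dist (g u) (g Y)).
  destruct (continuity_ab_min phi (Y + del) (Y + 1 - del)) as [Mx [Hmin HMx]];
    [lra|intros; apply continuity_pt_l1dist; auto|].
  assert (Hpos : 0 < phi Mx).
  { destruct (Rlt_or_le 0 (phi Mx)) as [|Hle]; auto; exfalso.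
    pose proof (l1dist_nonneg (g Mx) (g Y)) as Hnn; fold (phi Mx) in Hnn.
    assert (Heq : g Mx = g Y) by (apply l1dist_eq0; change (phi Mx = 0); lra).
    destruct (Hinj Mx Y Heq) as [j Hj].
    assert (Hj01 : 0 < IZR j < 1) by lra; destruct Hj01 as [Hj0 Hj1].
    apply lt_IZR in Hj0; apply lt_IZR in Hj1; lia. }
  exists (phi Mx / 4); split; [lra|]; intros u Hu.
  apply l1dist_box_close in Hu; fold (phi u) in Hu.
  destruct (archimed (u - Y - del)) as [A1 A2].
  set (j := (up (u - Y - del) - 1)%Z).
  assert (Ej : IZR j = IZR (up (u - Y - del)) - 1) by (unfold j; rewrite minus_IZR; reflexivity).
  assert (Hshift : phi (u + - IZR j) = phi u).
  { unfold phi; rewrite <- opp_IZR, periodic_shift; auto. }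
  destruct (Rle_dec (u + - IZR j) (Y + 1 - del)) as [Hle|Hgt].
  - specialize (Hmin (u + - IZR j) ltac:(lra)); lra.
  - exists (- j - 1)%Z; rewrite minus_IZR, opp_IZR; apply Rabs_def1; lra.
Qed.

Lemma parameter_localisation (g : R -> R3) (yn : nat -> R) (Y del : R) :
  comp_continuous g -> periodic1 g -> injS1 g -> convS1 yn Y -> 0 < del <= 1 / 2 ->
  exists eps, 0 < eps /\ eventually (fun n => forall q : R -> R3,
    (forall t, box_close eps (q t) (g t)) ->
    forall b, q b = q (yn n) -> exists k : Z, Rabs (b + IZR k - Y) < del).
Proof.
  intros Hg Hgp Hinj Hy Hdel.
  destruct (injective_curve_inverse g Y del Hg Hgp Hinj Hdel) as [m [Hm Hinv]].
  exists (m / 4); split; [lra|].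
  destruct (convS1_image g yn Y (m / 4) Hg Hgp Hy) as [N HN]; [lra|].
  exists N; intros n Hn q Hq b Hb; apply Hinv.
  apply box_close_le with (m / 4 + m / 4 + m / 4); [lra|].
  apply box_close_trans with (g (yn n)); [|apply HN; exact Hn].
  apply box_close_trans with (q b); [apply box_close_sym, Hq|rewrite Hb; apply Hq].
Qed.

Lemma edge_index (n : nat) (a0 s : R) : 0 < INR n ->
  exists k : Z, a0 + IZR k / INR n <= s < a0 + (IZR k + 1) / INR n.
Proof.
  intro Hn; set (x := INR n * (s - a0)); destruct (archimed x) as [A1 A2].
  exists (up x - 1)%Z; rewrite minus_IZR.
  assert (Hs : s = a0 + x / INR n) by (unfold x; field; lra).
  rewrite Hs; unfold Rdiv; split.
  - apply Rplus_le_compat_l, Rmult_le_compat_r; [left; apply Rinv_0_lt_compat|]; lra.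
  - apply Rplus_lt_compat_l, Rmult_lt_compat_r; [apply Rinv_0_lt_compat|]; lra.
Qed.

Lemma polygon_edges (n : nat) (p : R -> R3) : in_P n p ->
  exists a0 : R, forall k : Z, exists e : R3, forall y z,
    a0 + IZR k / INR n <= y <= a0 + (IZR k + 1) / INR n ->
    a0 + IZR k / INR n <= z <= a0 + (IZR k + 1) / INR n ->
    p y = vadd (p z) (vscale (y - z) e).
Proof.
  intros [_ [Hn [a0 Hedges]]]; exists a0; intro k.
  assert (Hn0 : 0 < INR n) by (apply lt_0_INR; exact Hn).
  destruct (Hedges k) as [_ Haff]; cbv zeta in Haff.
  set (T0 := a0 + IZR k / INR n) in *; set (T1 := a0 + (IZR k + 1) / INR n) in *.
  assert (Hlen : T1 - T0 = / INR n) by (unfold T0, T1; field; lra).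
  set (V := vsub (p T1) (p T0)) in *.
  assert (Hline : forall y, T0 <= y <= T1 -> p y = vadd (p T0) (vscale (INR n * (y - T0)) V)).
  { intros y Hy; replace y with (T0 + (y - T0)) at 1 by ring; apply Haff; lra. }
  exists (vscale (INR n) V); intros y z Hy Hz; rewrite (Hline y Hy), (Hline z Hz).
  apply R3_eq; unfold vadd, vscale, c1, c2, c3; simpl; ring.
Qed.

Lemma polygon_one_sided_affine (n : nat) (p : R -> R3) (s : R) : in_P n p ->
  exists h ep em, 0 < h <= / INR n /\
    (forall y, s <= y < s + h -> p y = vadd (p s) (vscale (y - s) ep)) /\
    (forall y, s - h < y <= s -> p y = vadd (p s) (vscale (y - s) em)).
Proof.
  intro HP; assert (Hn0 : 0 < INR n) by (destruct HP as [_ [Hn _]]; apply lt_0_INR; exact Hn).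
  destruct (polygon_edges n p HP) as [a0 Hedges].
  destruct (edge_index n a0 s Hn0) as [k [Hk0 Hk1]]; destruct (Hedges k) as [e He].
  set (T0 := a0 + IZR k / INR n) in *; set (T1 := a0 + (IZR k + 1) / INR n) in *.
  assert (Hlen : T1 - T0 = / INR n) by (unfold T0, T1; field; lra).
  destruct (Rlt_dec T0 s) as [Hlt|Hge].
  - exists (Rmin (T1 - s) (s - T0)), e, e.
    pose proof (Rmin_l (T1 - s) (s - T0)); pose proof (Rmin_r (T1 - s) (s - T0)).
    split; [split; [apply Rmin_pos|]; lra|].
    split; intros y Hy; apply He; lra.
  - destruct (Hedges (k - 1)%Z) as [e' He']; rewrite minus_IZR in He'.
    assert (Hs : T0 = s) by lra.
    assert (Hprev0 : a0 + (IZR k - 1) / INR n = s - / INR n) by (rewrite <- Hs; unfold T0; field; lra).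
    assert (Hprev1 : a0 + (IZR k - 1 + 1) / INR n = s) by (rewrite <- Hs; unfold T0; field; lra).
    rewrite Hprev0, Hprev1 in He'.
    exists (/ INR n), e, e'; split; [split; [apply Rinv_0_lt_compat|]; lra|].
    split; intros y Hy; [apply He|apply He']; lra.
Qed.

Lemma sqnorm_nonneg (v : R3) : 0 <= sqnorm v.
Proof. unfold sqnorm, dot; nra. Qed.

Lemma sqnorm_line (c P e : R3) (x : R) :
  sqnorm (vsub c (vadd P (vscale x e))) =
  sqnorm (vsub c P) - 2 * x * dot (vsub c P) e + x * x * sqnorm e.
Proof. unfold sqnorm, dot, vsub, vadd, vscale, c1, c2, c3; simpl; ring. Qed.

Lemma ray_max_sign (a q rho : R) : 0 < rho -> 0 <= q ->
  (forall tau, 0 < tau < rho -> tau * tau * q - 2 * tau * a <= 0) -> 0 <= a.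
Proof. intros Hr Hq H; specialize (H (rho / 2) ltac:(lra)); nra. Qed.

Lemma ray_min_sign (a q rho : R) : 0 < rho -> 0 <= q ->
  (forall tau, 0 < tau < rho -> 0 <= tau * tau * q - 2 * tau * a) -> a <= 0.
Proof.
  intros Hr Hq H; destruct (Rle_dec a 0) as [|Ha]; auto; exfalso.
  set (tau := Rmin (rho / 2) (a / (q + 1))).
  assert (Ht0 : 0 < tau) by (apply Rmin_pos; [lra|apply Rdiv_lt_0_compat; lra]).
  assert (Ht1 : tau <= rho / 2) by apply Rmin_l.
  assert (Ht2 : tau * (q + 1) <= a).
  { apply Rle_trans with (a / (q + 1) * (q + 1)); [apply Rmult_le_compat_r, Rmin_r; lra|].
    right; field; lra. }
  specialize (H tau ltac:(lra)); nra.
Qed.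

Lemma extremum_sign (p : R -> R3) (c : R3) (s h : R) (ep em : R3) : 0 < h ->
  (forall y, s <= y < s + h -> p y = vadd (p s) (vscale (y - s) ep)) ->
  (forall y, s - h < y <= s -> p y = vadd (p s) (vscale (y - s) em)) ->
  loc_extremum (fun u => sqnorm (vsub c (p u))) s ->
  dot (vsub c (p s)) ep * dot (vsub c (p s)) em <= 0.
Proof.
  intros Hh Hright Hleft [del [Hdel Hext]].
  set (d := vsub c (p s)); set (rho := Rmin h del).
  assert (Hrho : 0 < rho) by (apply Rmin_pos; lra).
  assert (Hrho_h : rho <= h) by apply Rmin_l; assert (Hrho_del : rho <= del) by apply Rmin_r.
  pose proof (sqnorm_nonneg ep); pose proof (sqnorm_nonneg em).
  assert (Fwd : forall tau, 0 < tau < rho -> Rabs (s + tau - s) < del /\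
     sqnorm (vsub c (p (s + tau))) - sqnorm d = tau * tau * sqnorm ep - 2 * tau * dot d ep).
  { intros tau Ht; replace (s + tau - s) with tau by ring; rewrite Rabs_pos_eq by lra.
    split; [lra|]; rewrite Hright by lra; replace (s + tau - s) with tau by ring.
    rewrite sqnorm_line; fold d; ring. }
  assert (Bwd : forall tau, 0 < tau < rho -> Rabs (s - tau - s) < del /\
     sqnorm (vsub c (p (s - tau))) - sqnorm d = tau * tau * sqnorm em - 2 * tau * (- dot d em)).
  { intros tau Ht; replace (s - tau - s) with (- tau) by ring; rewrite Rabs_Ropp, Rabs_pos_eq by lra.
    split; [lra|]; rewrite Hleft by lra; replace (s - tau - s) with (- tau) by ring.
    rewrite sqnorm_line; fold d; ring. }
  destruct Hext as [Hmax|Hmin].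
  - assert (Hp : 0 <= dot d ep).
    { apply (ray_max_sign _ (sqnorm ep) rho); auto; intros tau Ht.
      destruct (Fwd tau Ht) as [Hn He]; specialize (Hmax _ Hn); simpl in Hmax; fold d in Hmax; lra. }
    assert (Hm : 0 <= - dot d em).
    { apply (ray_max_sign _ (sqnorm em) rho); auto; intros tau Ht.
      destruct (Bwd tau Ht) as [Hn He]; specialize (Hmax _ Hn); simpl in Hmax; fold d in Hmax; lra. }
    nra.
  - assert (Hp : dot d ep <= 0).
    { apply (ray_min_sign _ (sqnorm ep) rho); auto; intros tau Ht.
      destruct (Fwd tau Ht) as [Hn He]; specialize (Hmin _ Hn); simpl in Hmin; fold d in Hmin; lra. }
    assert (Hm : - dot d em <= 0).
    { apply (ray_min_sign _ (sqnorm em) rho); auto; intros tau Ht.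
      destruct (Bwd tau Ht) as [Hn He]; specialize (Hmin _ Hn); simpl in Hmin; fold d in Hmin; lra. }
    nra.
Qed.

(* Off a null set the velocity of q is eps-close to g'; hence the constant velocity
   of q on a nondegenerate interval is eps-close to g' at some point of it. *)
Lemma affine_velocity_near_derivative (q g g' : R -> R3) (Z : R -> Prop)
  (eps lo hi s0 : R) (P e : R3) :
  null_set Z -> lo < hi -> (forall t, vderiv g t (g' t)) ->
  (forall t, ~ Z t -> exists a b, vderiv q t a /\ vderiv g t b /\ norm (vsub a b) <= eps) ->
  (forall y, lo < y < hi -> q y = vadd P (vscale (y - s0) e)) ->
  exists tau, lo < tau < hi /\ box_close eps e (g' tau).
Proof.
  intros HZ Hlh Hd Hclose Haff.
  destruct (null_set_no_interval Z lo hi HZ Hlh) as [tau [Htau HnZ]].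
  destruct (Hclose tau HnZ) as [a [b [Ha [Hb Hab]]]].
  rewrite (vderiv_affine q tau lo hi s0 P e a Htau Haff Ha) in Hab.
  rewrite (vderiv_unique g tau b (g' tau) Hb (Hd tau)) in Hab.
  exists tau; split; [exact Htau|apply norm_box_close; exact Hab].
Qed.

(* The Lipschitz bound on g', in terms of box_close (the constant |L| + 1 is
   positive even when L is not). *)
Lemma lipschitz_box_close (f : R -> R3) (L a b : R) :
  (forall x y, norm (vsub (f x) (f y)) <= L * Rabs (x - y)) ->
  box_close ((Rabs L + 1) * Rabs (a - b)) (f a) (f b).
Proof.
  intro HL; apply norm_box_close; eapply Rle_trans; [apply HL|].
  apply Rmult_le_compat_r; [apply Rabs_pos|pose proof (Rle_abs L); lra].
Qed.

Lemma affine_velocity_near_tangent (q g g' : R -> R3) (Z : R -> Prop)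
  (L eps rho lo hi s0 Y : R) (P e : R3) :
  null_set Z -> lo < hi -> (forall t, vderiv g t (g' t)) ->
  (forall a b, norm (vsub (g' a) (g' b)) <= L * Rabs (a - b)) ->
  (forall t, ~ Z t -> exists a b, vderiv q t a /\ vderiv g t b /\ norm (vsub a b) <= eps) ->
  (forall y, lo < y < hi -> q y = vadd P (vscale (y - s0) e)) ->
  (forall y, lo < y < hi -> Rabs (y - Y) <= rho) ->
  box_close (eps + (Rabs L + 1) * rho) e (g' Y).
Proof.
  intros HZ Hlh Hd HL Hvel Haff Hnear.
  destruct (affine_velocity_near_derivative q g g' Z eps lo hi s0 P e HZ Hlh Hd Hvel Haff)
    as [tau [Htau Hclose]].
  apply box_close_le with (eps + (Rabs L + 1) * Rabs (tau - Y));
    [|exact (box_close_trans _ _ _ _ _ Hclose (lipschitz_box_close g' L tau Y HL))].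
  pose proof (Rabs_pos L); pose proof (Hnear tau Htau).
  assert ((Rabs L + 1) * Rabs (tau - Y) <= (Rabs L + 1) * rho) by (apply Rmult_le_compat_l; lra).
  lra.
Qed.

Section TangentOrthogonality.
Variables (g g' : R -> R3) (L : R) (p : nat -> R -> R3) (xn yn : nat -> R) (X Y : R).
Hypothesis Hgp : periodic1 g.
Hypothesis Hinj : injS1 g.
Hypothesis Hd : forall t, vderiv g t (g' t).
Hypothesis HL : forall a b, norm (vsub (g' a) (g' b)) <= L * Rabs (a - b).
Hypothesis Hp : forall n, (2 <= n)%nat -> in_P n (p n).
Hypothesis Hconv : W1inf_conv p g.
Hypothesis Hx : convS1 xn X.
Hypothesis Hy : convS1 yn Y.
Hypothesis Hcrit : forall n, (2 <= n)%nat -> exists b, p n b = p n (yn n) /\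
  loc_extremum (fun u => sqnorm (vsub (p n (xn n)) (p n u))) b.

(* For large n, around the critical parameter b (shifted near Y), the vector
   p_n(x_n) - p_n(b) approximates g(X) - g(Y) and both one-sided velocities of p_n
   approximate g'(Y), while extremality forces opposite signs of the dot products. *)
Lemma approximate_configuration (r : R) : 0 < r <= 1 ->
  exists d ep em, box_close r d (vsub (g X) (g Y)) /\ box_close r ep (g' Y) /\
    box_close r em (g' Y) /\ dot d ep * dot d em <= 0.
Proof.
  intro Hr; set (LL := Rabs L + 1); assert (HLL : 1 <= LL) by (pose proof (Rabs_pos L); unfold LL; lra).
  assert (Hg : comp_continuous g) by exact (differentiable_comp_continuous g g' Hd).
  destruct (continuous_box_close g Y (r / 4) Hg ltac:(lra)) as [dY [HdY CY]].
  set (del := Rmin (Rmin (1 / 2) dY) (r / (8 * LL))).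
  assert (Hdel : 0 < del) by (repeat apply Rmin_pos; try apply Rdiv_lt_0_compat; lra).
  assert (Hdel1 : del <= Rmin (1 / 2) dY) by apply Rmin_l; pose proof (Rmin_l (1 / 2) dY);
    pose proof (Rmin_r (1 / 2) dY); assert (Hdel2 : del <= r / (8 * LL)) by apply Rmin_r.
  destruct (parameter_localisation g yn Y del Hg Hgp Hinj Hy ltac:(lra)) as [eps0 [Heps0 Hloc]].
  set (eps := Rmin (r / 8) eps0).
  assert (Heps : 0 < eps) by (apply Rmin_pos; lra).
  assert (Heps1 : eps <= r / 8) by apply Rmin_l; assert (Heps2 : eps <= eps0) by apply Rmin_r.
  destruct (eventually_exists _ (eventually_and _ _ (eventually_ge 2) (eventually_and _ _
    (Hconv eps Heps) (eventually_and _ _ (convS1_image g xn X (r / 4) Hg Hgp Hx ltac:(lra))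
    (eventually_and _ _ (eventually_inv_small (r / (8 * LL)) ltac:(apply Rdiv_lt_0_compat; lra))
    Hloc))))) as [n [Hn2 [[Hunif [Z [HZ Hvel]]] [HgX [Hn_small Hlocn]]]]].
  assert (Hbox : forall t, box_close eps (p n t) (g t)) by (intro t; apply norm_box_close, Hunif).
  destruct (Hcrit n Hn2) as [b [Hb Hext]].
  destruct (Hlocn (p n) (fun t => box_close_le _ _ _ _ Heps2 (Hbox t)) b Hb) as [k Hk].
  set (b' := b + IZR k) in *.
  assert (Hpp : periodic1 (p n)) by (destruct (Hp n Hn2) as [[Hper _] _]; exact Hper).
  apply (loc_extremum_shift _ b k) in Hext; [|intro u; simpl; rewrite Hpp; reflexivity].
  destruct (polygon_one_sided_affine n (p n) b' (Hp n Hn2)) as [h [ep [em [Hh [Hright Hleft]]]]].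
  assert (Hslope : LL * (/ INR n + del) <= r / 4).
  { apply Rle_trans with (LL * (r / (8 * LL) + r / (8 * LL))); [apply Rmult_le_compat_l; lra|].
    right; field; lra. }
  assert (Hnear : forall y, Rabs (y - b') < h -> Rabs (y - Y) <= / INR n + del).
  { intros y Hy'; pose proof (Rabs_sub_triang y b' Y); lra. }
  exists (vsub (p n (xn n)) (p n b')), ep, em; split; [|split; [|split]].
  - apply box_close_le with ((eps + r / 4) + (eps + r / 4)); [lra|apply box_close_vsub].
    + exact (box_close_trans _ _ _ _ _ (Hbox (xn n)) HgX).
    + exact (box_close_trans _ _ _ _ _ (Hbox b') (CY b' ltac:(lra))).
  - apply box_close_le with (eps + LL * (/ INR n + del)); [lra|].
    apply (affine_velocity_near_tangent (p n) g g' Z L eps _ b' (b' + h) b' Y (p n b'));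
      auto; [lra|intros y Hy'; apply Hright; lra|].
    intros y Hy'; apply Hnear; rewrite Rabs_pos_eq; lra.
  - apply box_close_le with (eps + LL * (/ INR n + del)); [lra|].
    apply (affine_velocity_near_tangent (p n) g g' Z L eps _ (b' - h) b' b' Y (p n b'));
      auto; [lra|intros y Hy'; apply Hleft; lra|].
    intros y Hy'; apply Hnear; rewrite Rabs_left; lra.
  - exact (extremum_sign (p n) (p n (xn n)) b' h ep em (proj1 Hh) Hright Hleft Hext).
Qed.

Lemma tangent_orthogonality : dot (vsub (g X) (g Y)) (g' Y) = 0.
Proof. exact (orthogonal_of_approximations _ _ approximate_configuration). Qed.
End TangentOrthogonality.

Lemma sqnorm_vsub_sym (a b : R3) : sqnorm (vsub a b) = sqnorm (vsub b a).
Proof. unfold sqnorm, dot, vsub, c1, c2, c3; simpl; ring. Qed.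

Lemma dot_comm (a b : R3) : dot a b = dot b a.
Proof. unfold dot; ring. Qed.

Lemma dot_vsub_sym (a b e : R3) : dot (vsub a b) e = - dot (vsub b a) e.
Proof. unfold dot, vsub, c1, c2, c3; simpl; ring. Qed.

Lemma loc_extremum_ext (f f' : R -> R) (x : R) :
  (forall u, f u = f' u) -> loc_extremum f x -> loc_extremum f' x.
Proof.
  intros E [d [Hd H]]; exists d; split; auto.
  destruct H as [H|H]; [left|right]; intros u Hu; rewrite <- !E; auto.
Qed.

Lemma dcrit_P_sym (q : R -> R3) (x y : R3) : dcrit_P q x y -> dcrit_P q y x.
Proof.
  intros [Hxy [t0 [s0 [Ex [Ey [Hs Ht]]]]]]; split; [auto|].
  exists s0, t0; repeat split; auto; eapply loc_extremum_ext; eauto;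
    intro u; apply sqnorm_vsub_sym.
Qed.

Lemma dcrit_P_extremum (q : R -> R3) (x y : R3) : dcrit_P q x y ->
  exists b, q b = y /\ loc_extremum (fun u => sqnorm (vsub x (q u))) b.
Proof. intros [_ [t0 [s0 [-> [-> [Hs _]]]]]]; exists s0; auto. Qed.

Theorem lemma13 (K : (R3 -> Prop) -> Prop) (HK : tame_knot_class K)
  (g : R -> R3) (Hg : in_CK K g) (Hreg : C11 g)
  (p : nat -> R -> R3) (Hp : forall n, (2 <= n)%nat -> in_P n (p n))
  (Hconv : W1inf_conv p g)
  (sn tn : nat -> R) (s t : R)
  (Hneq : forall n, (2 <= n)%nat -> ~ eqS1 (sn n) (tn n))
  (Hs : convS1 sn s) (Ht : convS1 tn t) (Hst : ~ eqS1 s t)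
  (Hcrit : forall n, (2 <= n)%nat -> dcrit_P (p n) (p n (sn n)) (p n (tn n))) :
  dcrit_C1 g (g s) (g t).
Proof.
  destruct Hg as [[Hgp _] [Hinj _]]; destruct Hreg as [g' [Hd [L HL]]].
  assert (Ht_orth : dot (vsub (g s) (g t)) (g' t) = 0).
  { apply (tangent_orthogonality g g' L p sn tn s t Hgp Hinj Hd HL Hp Hconv Hs Ht).
    intros n Hn; exact (dcrit_P_extremum _ _ _ (Hcrit n Hn)). }
  assert (Hs_orth : dot (vsub (g t) (g s)) (g' s) = 0).
  { apply (tangent_orthogonality g g' L p tn sn t s Hgp Hinj Hd HL Hp Hconv Ht Hs).
    intros n Hn; exact (dcrit_P_extremum _ _ _ (dcrit_P_sym _ _ _ (Hcrit n Hn))). }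
  exists s, t, (g' s), (g' t); do 2 (split; [reflexivity|]).
  split; [intro E; apply Hst, Hinj; exact E|].
  do 2 (split; [apply Hd|]); split.
  - rewrite dot_comm, dot_vsub_sym, Hs_orth; ring.
  - rewrite dot_comm; exact Ht_orth.
Qed.
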